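(* Let $q_1,q_2$ be piecewise continuous on $[a,b]$, and let $a,b$ be consecutive zeros of a solution $u$ of $u''+q_1(t)u=0$. Suppose $J\subset[a,b]$ is an interval such that $q_1(t)\le q_2(t)$ for all $t\in[a,b]\setminus J$ and $q_1(t)>q_2(t)$ for all $t\in J$. Then every solution $v$ of $v''+q_2(t)v=0$ has at most one zero in $J$.
   Context: ''Solution'' always means a nontrivial (not identically zero) solution. *)

From Stdlib Require Export Reals List.
Open Scope R_scope.

Definition cont_within (a b : R) (f : R -> R) (t : R) : Prop :=
  forall eps, eps > 0 -> exists delta, delta > 0 /\
    forall s, a <= s <= b -> Rabs (s - t) < delta -> Rabs (f s - f t) < eps.

Definition deriv_within (a b : R) (f : R -> R) (t d : R) : Prop :=
  forall eps, eps > 0 -> exists delta, delta > 0 /\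
    forall h, h <> 0 -> Rabs h < delta -> a <= t + h <= b ->
      Rabs ((f (t + h) - f t) / h - d) < eps.

Definition right_limit_within (b : R) (f : R -> R) (t l : R) : Prop :=
  forall eps, eps > 0 -> exists delta, delta > 0 /\
    forall s, t < s < t + delta -> s <= b -> Rabs (f s - l) < eps.

Definition left_limit_within (a : R) (f : R -> R) (t l : R) : Prop :=
  forall eps, eps > 0 -> exists delta, delta > 0 /\
    forall s, t - delta < s < t -> a <= s -> Rabs (f s - l) < eps.

Definition piecewise_continuous (q : R -> R) (a b : R) : Prop :=
  (exists P : list R, forall t, a < t < b -> ~ In t P -> continuity_pt q t) /\
  (forall t, a <= t < b -> exists l, right_limit_within b q t l) /\
  (forall t, a < t <= b -> exists l, left_limit_within a q t l).

(* u solves u'' + q u = 0 on [a,b]: u is C^1 on [a,b] and, at every interior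
   point where q is continuous, u' is differentiable with (u')' = - q u. *)
Definition ode_solution (q : R -> R) (a b : R) (u : R -> R) : Prop :=
  exists u' : R -> R,
    (forall t, a <= t <= b -> deriv_within a b u t (u' t)) /\
    (forall t, a <= t <= b -> cont_within a b u' t) /\
    (forall t, a < t < b -> continuity_pt q t ->
        derivable_pt_lim u' t (- q t * u t)).

(* "Solution" means nontrivial solution. *)
Definition nontrivial_solution (q : R -> R) (a b : R) (u : R -> R) : Prop :=
  ode_solution q a b u /\ exists t, a <= t <= b /\ u t <> 0.

Definition is_interval (J : R -> Prop) : Prop :=
  forall x y z, J x -> J z -> x <= y <= z -> J y.

(* Sturm comparison via the Wronskian.  A nontrivial solution v of
   v'' + q2 v = 0 has only simple zeros: if v(c) = v'(c) = 0, the energy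
   E = v^2 + v'^2 satisfies |E'| <= K E and vanishes at c, hence everywhere
   (Gronwall).  So two zeros of v in J yield consecutive zeros s < m in J.
   After fixing signs, u > 0 and v > 0 on (s, m), and W = u v' - u' v has
   W' = (q1 - q2) u v > 0 there, off the finitely many discontinuities of
   q1 and q2; thus W(s) < W(m).  But W(s) = u(s) v'(s) >= 0 and
   W(m) = u(m) v'(m) <= 0. *)

From Stdlib Require Import Reals Lra List Classical.
Open Scope R_scope.

Definition clamp (a b x : R) : R := Rmax a (Rmin b x).

Lemma clamp_in a b x : a <= b -> a <= clamp a b x <= b.
Proof. intros; unfold clamp, Rmax, Rmin; repeat destruct Rle_dec; lra. Qed.

Lemma clamp_id a b x : a <= x <= b -> clamp a b x = x.
Proof. intros; unfold clamp, Rmax, Rmin; repeat destruct Rle_dec; lra. Qed.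

Lemma clamp_lipschitz a b x y : a <= b ->
  Rabs (clamp a b x - clamp a b y) <= Rabs (x - y).
Proof. intros; unfold clamp, Rmax, Rmin; repeat destruct Rle_dec; split_Rabs; lra. Qed.

Lemma continuity_pt_clamp_comp a b f x : a <= b ->
  (forall t, a <= t <= b -> cont_within a b f t) ->
  continuity_pt (fun y => f (clamp a b y)) x.
Proof.
  intros hab C eps he.
  destruct (C (clamp a b x) (clamp_in a b x hab) eps he) as [d [hd Hd]].
  exists d; split; [lra|]. intros y [_ hy]; simpl in *; unfold Rdist in *.
  apply Hd; [apply clamp_in; lra|].
  eapply Rle_lt_trans; [apply clamp_lipschitz; lra | exact hy].
Qed.

Lemma cont_within_of_clamp_comp a b f t : a <= t <= b ->
  continuity_pt (fun y => f (clamp a b y)) t -> cont_within a b f t.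
Proof.
  intros ht C eps he. destruct (C eps he) as [d [hd Hd]]; simpl in Hd; unfold Rdist in Hd.
  exists d; split; [lra|]. intros s hs hst.
  rewrite <- (clamp_id a b s), <- (clamp_id a b t) by lra.
  destruct (Req_dec s t) as [->|hne]; [rewrite Rminus_diag, Rabs_R0; lra|].
  apply Hd. split; [split; [exact I | auto] | exact hst].
Qed.

Lemma cont_within_of_continuity_pt a b f t :
  continuity_pt f t -> cont_within a b f t.
Proof.
  intros C eps he. destruct (C eps he) as [d [hd Hd]]; simpl in Hd; unfold Rdist in Hd.
  exists d; split; [lra|]. intros s _ hst.
  destruct (Req_dec s t) as [->|hne]; [rewrite Rminus_diag, Rabs_R0; lra|].
  apply Hd. split; [split; [exact I | auto] | exact hst].
Qed.

Section ContWithinAlgebra.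

Variables (a b : R) (f g : R -> R).
Hypothesis hab : a <= b.
Hypothesis Cf : forall t, a <= t <= b -> cont_within a b f t.
Hypothesis Cg : forall t, a <= t <= b -> cont_within a b g t.

Let Cf_clamp := fun x => continuity_pt_clamp_comp a b f x hab Cf.
Let Cg_clamp := fun x => continuity_pt_clamp_comp a b g x hab Cg.

Lemma cont_within_plus t : a <= t <= b -> cont_within a b (fun x => f x + g x) t.
Proof. intros; apply cont_within_of_clamp_comp, continuity_pt_plus; auto. Qed.

Lemma cont_within_minus t : a <= t <= b -> cont_within a b (fun x => f x - g x) t.
Proof. intros; apply cont_within_of_clamp_comp, continuity_pt_minus; auto. Qed.

Lemma cont_within_mult t : a <= t <= b -> cont_within a b (fun x => f x * g x) t.
Proof. intros; apply cont_within_of_clamp_comp, continuity_pt_mult; auto. Qed.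

Lemma cont_within_opp t : a <= t <= b -> cont_within a b (fun x => - f x) t.
Proof. intros; apply cont_within_of_clamp_comp, continuity_pt_opp; auto. Qed.

End ContWithinAlgebra.

Lemma cont_within_restrict a b a' b' f t : a <= a' -> b' <= b ->
  cont_within a b f t -> cont_within a' b' f t.
Proof.
  intros h1 h2 C eps he. destruct (C eps he) as [d [hd Hd]].
  exists d; split; auto. intros s hs. apply Hd; lra.
Qed.

Lemma deriv_within_restrict a b a' b' f t d : a <= a' -> b' <= b ->
  deriv_within a b f t d -> deriv_within a' b' f t d.
Proof.
  intros h1 h2 D eps he. destruct (D eps he) as [del [hd Hd]].
  exists del; split; auto. intros h hh hl ht. apply Hd; auto; lra.
Qed.

Lemma deriv_within_interior a b f t d : a < t < b ->
  deriv_within a b f t d -> derivable_pt_lim f t d.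
Proof.
  intros ht D eps he. destruct (D eps he) as [del [hd Hd]].
  assert (hp : 0 < Rmin del (Rmin (t - a) (b - t))).
  { unfold Rmin; repeat destruct Rle_dec; lra. }
  exists (mkposreal _ hp). intros h hh hl; simpl in hl.
  assert (Rabs h < del /\ Rabs h < t - a /\ Rabs h < b - t) as [h1 [h2 h3]].
  { revert hl; unfold Rmin; repeat destruct Rle_dec; intros; lra. }
  apply Hd; auto. revert h2 h3; split_Rabs; lra.
Qed.

Lemma deriv_within_cont_within a b f t d :
  deriv_within a b f t d -> cont_within a b f t.
Proof.
  intros D eps he. destruct (D 1 ltac:(lra)) as [del [hdel Hd]].
  assert (hk : 0 < Rabs d + 1) by (pose proof (Rabs_pos d); lra).
  exists (Rmin del (eps / (Rabs d + 1))). split.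
  { unfold Rmin; destruct Rle_dec; [lra | apply Rdiv_lt_0_compat; lra]. }
  intros s hs hst.
  destruct (Req_dec s t) as [->|hne]; [rewrite Rminus_diag, Rabs_R0; lra|].
  assert (Rabs (s - t) < del /\ Rabs (s - t) < eps / (Rabs d + 1)) as [h1 h2].
  { revert hst; unfold Rmin; destruct Rle_dec; lra. }
  specialize (Hd (s - t) ltac:(lra) h1). replace (t + (s - t)) with s in Hd by ring.
  specialize (Hd hs).
  assert (hq : Rabs ((f s - f t) / (s - t)) < Rabs d + 1).
  { pose proof (Rabs_triang_inv ((f s - f t) / (s - t)) d). lra. }
  replace (f s - f t) with ((f s - f t) / (s - t) * (s - t)) by (field; lra).
  rewrite Rabs_mult.
  apply Rle_lt_trans with ((Rabs d + 1) * Rabs (s - t)).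
  { apply Rmult_le_compat_r; [apply Rabs_pos | lra]. }
  apply Rlt_le_trans with ((Rabs d + 1) * (eps / (Rabs d + 1))).
  { apply Rmult_lt_compat_l; lra. }
  right; field; lra.
Qed.

Definition ode_solution_with (q : R -> R) (a b : R) (u u' : R -> R) : Prop :=
  (forall t, a <= t <= b -> deriv_within a b u t (u' t)) /\
  (forall t, a <= t <= b -> cont_within a b u' t) /\
  (forall t, a < t < b -> continuity_pt q t -> derivable_pt_lim u' t (- q t * u t)).

Lemma ode_solution_with_cont q a b u u' : ode_solution_with q a b u u' ->
  forall t, a <= t <= b -> cont_within a b u t.
Proof. intros [D _] t ht. exact (deriv_within_cont_within _ _ _ _ _ (D t ht)). Qed.

Lemma ode_solution_with_opp q a b u u' : a <= b -> ode_solution_with q a b u u' ->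
  ode_solution_with q a b (fun x => - u x) (fun x => - u' x).
Proof.
  intros hab [D [C D']]. split; [|split].
  - intros t ht eps he. destruct (D t ht eps he) as [d [hd Hd]].
    exists d; split; auto. intros h hh hl hr.
    replace ((- u (t + h) - - u t) / h - - u' t)
      with (- ((u (t + h) - u t) / h - u' t)) by (field; auto).
    rewrite Rabs_Ropp; auto.
  - exact (cont_within_opp a b u' hab C).
  - intros t ht hc. replace (- q t * - u t) with (- (- q t * u t)) by ring.
    apply (derivable_pt_lim_opp u'); auto.
Qed.

Lemma ode_solution_restrict q a b a' b' u : a <= a' -> b' <= b ->
  ode_solution q a b u -> ode_solution q a' b' u.
Proof.
  intros h1 h2 [u' [D [C D']]]. exists u'. split; [|split]; intros t ht.
  - apply deriv_within_restrict with a b; auto. apply D; lra.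
  - apply cont_within_restrict with a b; auto. apply C; lra.
  - apply D'; lra.
Qed.

Lemma Rle_of_inner_Rle g x y : x < y ->
  cont_within x y g x -> cont_within x y g y ->
  (forall x' y', x < x' < y' -> y' < y -> g x' <= g y') -> g x <= g y.
Proof.
  intros hxy Cx Cy Inner.
  destruct (Rle_or_lt (g x) (g y)) as [|hlt]; auto. exfalso.
  set (e := (g x - g y) / 2).
  destruct (Cx e ltac:(unfold e; lra)) as [d1 [hd1 H1]].
  destruct (Cy e ltac:(unfold e; lra)) as [d2 [hd2 H2]].
  set (x' := x + Rmin d1 (y - x) / 3).
  set (y' := y - Rmin d2 (y - x) / 3).
  assert (0 < Rmin d1 (y - x) <= y - x /\ Rmin d1 (y - x) <= d1).
  { unfold Rmin; destruct Rle_dec; lra. }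
  assert (0 < Rmin d2 (y - x) <= y - x /\ Rmin d2 (y - x) <= d2).
  { unfold Rmin; destruct Rle_dec; lra. }
  assert (hx' : Rabs (g x' - g x) < e).
  { apply H1; unfold x'; [lra | rewrite Rabs_right; lra]. }
  assert (hy' : Rabs (g y' - g y) < e).
  { apply H2; unfold y'; [lra | rewrite Rabs_left; lra]. }
  assert (g x' <= g y') by (apply Inner; unfold x', y'; lra).
  revert hx' hy'; unfold e; split_Rabs; lra.
Qed.

Lemma Rle_of_deriv_nonneg g d x y : x <= y ->
  cont_within x y g x -> cont_within x y g y ->
  (forall w, x < w < y -> derivable_pt_lim g w (d w) /\ 0 <= d w) -> g x <= g y.
Proof.
  intros hxy Cx Cy D. destruct (Req_dec x y) as [->|hne]; [lra|].
  apply Rle_of_inner_Rle; auto; [lra|]. intros x' y' h1 h2.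
  destruct (MVT_cor2 g d x' y') as [c [hc1 hc2]]; [lra | intros c hc; apply D; lra |].
  assert (0 <= d c) by (apply D; lra).
  assert (0 <= d c * (y' - x')) by (apply Rmult_le_pos; lra).
  lra.
Qed.

Lemma Rle_of_deriv_nonneg_off (L : list R) g d : forall x y, x <= y ->
  (forall w, x <= w <= y -> cont_within x y g w) ->
  (forall w, x < w < y -> ~ In w L -> derivable_pt_lim g w (d w) /\ 0 <= d w) ->
  g x <= g y.
Proof.
  induction L as [|p L IH]; intros x y hxy C D.
  - apply (Rle_of_deriv_nonneg g d); try apply C; try lra.
    intros w hw. apply D; auto.
  - assert (D' : forall x' y', x <= x' -> y' <= y -> ~ (x' < p < y') ->
              forall w, x' < w < y' -> ~ In w L -> derivable_pt_lim g w (d w) /\ 0 <= d w).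
    { intros x' y' h1 h2 hp w hw hn. apply D; [lra|]. intros [->|hi]; [lra | auto]. }
    assert (C' : forall x' y', x <= x' -> y' <= y ->
              forall w, x' <= w <= y' -> cont_within x' y' g w).
    { intros x' y' h1 h2 w hw. apply cont_within_restrict with x y; auto. apply C; lra. }
    destruct (Rlt_or_le x p); [destruct (Rlt_or_le p y)|].
    + apply Rle_trans with (g p); apply IH; try lra; try apply C'; try apply D'; lra.
    + apply IH; auto. apply D'; lra.
    + apply IH; auto. apply D'; lra.
Qed.

Lemma exists_between_notin (L : list R) : forall x y, x < y ->
  exists z, x < z < y /\ ~ In z L.
Proof.
  induction L as [|p L IH]; intros x y hxy.
  - exists ((x + y) / 2); split; [lra | auto].
  - destruct (Rlt_or_le x p) as [hp|hp].
    + destruct (IH x (Rmin y p)) as [z [hz hn]]; [unfold Rmin; destruct Rle_dec; lra|].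
      assert (z < y /\ z < p) by (revert hz; unfold Rmin; destruct Rle_dec; lra).
      exists z; split; [lra|]. intros [->|hi]; [lra | auto].
    + destruct (IH x y hxy) as [z [hz hn]].
      exists z; split; auto. intros [->|hi]; [lra | auto].
Qed.

Lemma deriv_pos_right_gt g z d r : derivable_pt_lim g z d -> 0 < d -> 0 < r ->
  exists h, 0 < h < r /\ g z < g (z + h).
Proof.
  intros D hd hr. destruct (D (d / 2) ltac:(lra)) as [del Hd].
  pose proof (cond_pos del).
  set (h := Rmin (del / 2) (r / 2)).
  assert (0 < h /\ h < del /\ h < r) by (unfold h, Rmin; destruct Rle_dec; lra).
  specialize (Hd h ltac:(lra) ltac:(rewrite Rabs_right; lra)).
  exists h; split; [lra|].
  assert (0 < (g (z + h) - g z) / h) by (revert Hd; split_Rabs; lra).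
  assert (0 < g (z + h) - g z); [|lra].
  replace (g (z + h) - g z) with ((g (z + h) - g z) / h * h) by (field; lra).
  apply Rmult_lt_0_compat; lra.
Qed.

Lemma Rlt_of_deriv_pos_off (L : list R) g d x y : x < y ->
  (forall w, x <= w <= y -> cont_within x y g w) ->
  (forall w, x < w < y -> ~ In w L -> derivable_pt_lim g w (d w) /\ 0 < d w) ->
  g x < g y.
Proof.
  intros hxy C D.
  assert (Mono : forall x' y', x <= x' <= y' -> y' <= y -> g x' <= g y').
  { intros x' y' h1 h2. apply (Rle_of_deriv_nonneg_off L g d); try lra.
    - intros w hw. apply cont_within_restrict with x y; try lra. apply C; lra.
    - intros w hw hn. destruct (D w ltac:(lra) hn). split; auto; lra. }
  destruct (exists_between_notin L x y hxy) as [z [hz hzn]].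
  destruct (D z hz hzn) as [Dz hdz].
  destruct (deriv_pos_right_gt g z (d z) (y - z) Dz hdz ltac:(lra)) as [h [hh hgt]].
  assert (g x <= g z) by (apply Mono; lra).
  assert (g (z + h) <= g y) by (apply Mono; lra).
  lra.
Qed.

Lemma cont_within_sign_const a b f x y : a <= x -> x < y -> y <= b ->
  (forall t, a <= t <= b -> cont_within a b f t) ->
  (forall w, x < w < y -> f w <> 0) ->
  (forall w, x < w < y -> 0 < f w) \/ (forall w, x < w < y -> f w < 0).
Proof.
  intros hax hxy hyb C N.
  assert (Cg : continuity (fun z => f (clamp a b z))).
  { intro z. apply continuity_pt_clamp_comp; auto; lra. }
  assert (Same : forall w1 w2, x < w1 <= w2 -> w2 < y -> 0 < f w1 * f w2).
  { intros w1 w2 h1 h2. destruct (Rlt_or_le 0 (f w1 * f w2)) as [|hle]; auto. exfalso.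
    destruct (IVT_cor _ w1 w2 Cg ltac:(lra)) as [z [hz hz0]].
    { rewrite !clamp_id by lra. exact hle. }
    rewrite clamp_id in hz0 by lra. apply (N z); auto; lra. }
  set (c := (x + y) / 2).
  assert (Pc : forall w, x < w < y -> 0 < f w * f c).
  { intros w hw. destruct (Rle_or_lt w c).
    - apply Same; unfold c in *; lra.
    - rewrite Rmult_comm. apply Same; unfold c in *; lra. }
  destruct (Rlt_or_le 0 (f c)); [left | right]; intros w hw; specialize (Pc w hw).
  - nra.
  - assert (f c <> 0) by (apply N; unfold c; lra). nra.
Qed.

Lemma deriv_within_ge0_of_pos_right a b f s m d : a <= s -> s < m -> m <= b ->
  deriv_within a b f s d -> f s = 0 -> (forall w, s < w < m -> 0 < f w) -> 0 <= d.
Proof.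
  intros h1 h2 h3 D fs P. destruct (Rle_or_lt 0 d) as [|hd]; auto. exfalso.
  destruct (D (- d / 2) ltac:(lra)) as [del [hdel Hd]].
  set (h := Rmin (del / 2) ((m - s) / 2)).
  assert (0 < h /\ h < del /\ h < m - s) by (unfold h, Rmin; destruct Rle_dec; lra).
  specialize (Hd h ltac:(lra) ltac:(rewrite Rabs_right; lra) ltac:(lra)).
  rewrite fs, Rminus_0_r in Hd.
  assert (0 < f (s + h) / h) by (apply Rdiv_lt_0_compat; [apply P|]; lra).
  revert Hd; split_Rabs; lra.
Qed.

Lemma deriv_within_le0_of_pos_left a b f s m d : a <= s -> s < m -> m <= b ->
  deriv_within a b f m d -> f m = 0 -> (forall w, s < w < m -> 0 < f w) -> d <= 0.
Proof.
  intros h1 h2 h3 D fm P. destruct (Rle_or_lt d 0) as [|hd]; auto. exfalso.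
  destruct (D (d / 2) ltac:(lra)) as [del [hdel Hd]].
  set (h := Rmin (del / 2) ((m - s) / 2)).
  assert (0 < h /\ h < del /\ h < m - s) by (unfold h, Rmin; destruct Rle_dec; lra).
  specialize (Hd (- h) ltac:(lra) ltac:(rewrite Rabs_left; lra) ltac:(lra)).
  rewrite fm, Rminus_0_r in Hd.
  assert (0 < f (m + - h) / h) by (apply Rdiv_lt_0_compat; [apply P|]; lra).
  replace (f (m + - h) / - h) with (- (f (m + - h) / h)) in Hd by (field; lra).
  revert Hd; split_Rabs; lra.
Qed.

Lemma nonzero_right_of_simple_zero a b f s d : a <= s < b -> d <> 0 ->
  deriv_within a b f s d -> f s = 0 ->
  exists e, e > 0 /\ forall w, s < w < s + e -> f w <> 0.
Proof.
  intros hs hd D fs.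
  destruct (D (Rabs d / 2)) as [del [hdel Hd]]; [pose proof (Rabs_pos_lt d hd); lra|].
  exists (Rmin del (b - s)). split; [unfold Rmin; destruct Rle_dec; lra|].
  intros w hw fw.
  assert (w - s < del /\ w - s < b - s) by (revert hw; unfold Rmin; destruct Rle_dec; lra).
  specialize (Hd (w - s) ltac:(lra) ltac:(rewrite Rabs_right; lra) ltac:(lra)).
  replace (s + (w - s)) with w in Hd by ring. rewrite fw, fs in Hd.
  replace ((0 - 0) / (w - s) - d) with (- d) in Hd by (field; lra).
  rewrite Rabs_Ropp in Hd. pose proof (Rabs_pos_lt d hd). lra.
Qed.

Lemma first_zero_after a b f s t : a <= s -> s < t -> t <= b ->
  (forall x, a <= x <= b -> cont_within a b f x) -> f t = 0 ->
  (exists e, e > 0 /\ forall w, s < w < s + e -> f w <> 0) ->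
  exists m, s < m <= t /\ f m = 0 /\ forall w, s < w < m -> f w <> 0.
Proof.
  intros h1 h2 h3 C ft [e [he He]].
  set (A := fun z => s <= z <= t /\ forall w, s < w <= z -> f w <> 0).
  destruct (completeness A) as [m [Hub Hlub]].
  { exists t; intros z [hz _]; lra. }
  { exists s; split; [lra | intros; lra]. }
  set (z0 := Rmin (s + e / 2) t).
  assert (s < z0 <= t /\ z0 < s + e) by (unfold z0, Rmin; destruct Rle_dec; lra).
  assert (hsm : s < m).
  { assert (Az0 : A z0) by (split; [lra | intros w hw; apply He; lra]).
    pose proof (Hub z0 Az0); lra. }
  assert (hmt : m <= t) by (apply Hlub; intros z [hz _]; lra).
  assert (Nz : forall w, s < w < m -> f w <> 0).
  { intros w hw fw. assert (m <= w); [|lra]. apply Hlub. intros z [hz Hz].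
    destruct (Rle_or_lt z w) as [|hlt]; auto. exfalso. apply (Hz w); [lra | auto]. }
  exists m; split; [lra|]; split; auto.
  (* otherwise f stays away from 0 a little beyond m, contradicting m = sup A *)
  apply NNPP; intro fm.
  destruct (Req_dec m t) as [->|hne]; [auto|].
  destruct (C m ltac:(lra) (Rabs (f m)) ltac:(apply Rabs_pos_lt; auto)) as [e' [he' He']].
  set (z1 := Rmin (m + e' / 2) t).
  assert (m < z1 <= t /\ z1 < m + e') by (unfold z1, Rmin; destruct Rle_dec; lra).
  assert (Az1 : A z1).
  { split; [lra|]. intros w hw fw.
    destruct (Rlt_or_le w m); [apply (Nz w); auto; lra|].
    specialize (He' w ltac:(lra) ltac:(rewrite Rabs_right; lra)).
    rewrite fw in He'. revert He'; split_Rabs; lra. }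
  pose proof (Hub z1 Az1); lra.
Qed.

Definition bounded_on (q : R -> R) (x y : R) : Prop :=
  exists M, forall t, x <= t <= y -> Rabs (q t) <= M.

Lemma bounded_on_point q x : bounded_on q x x.
Proof. exists (Rabs (q x)). intros t ht. replace t with x by lra. lra. Qed.

Lemma bounded_on_union q x y z w : z <= y ->
  bounded_on q x y -> bounded_on q z w -> bounded_on q x w.
Proof.
  intros hzy [M1 H1] [M2 H2]. exists (Rmax M1 M2). intros t ht.
  destruct (Rle_or_lt t y).
  - eapply Rle_trans; [apply H1; lra | apply Rmax_l].
  - eapply Rle_trans; [apply H2; lra | apply Rmax_r].
Qed.

Lemma bounded_on_left_of_limit a q t l : a < t -> left_limit_within a q t l ->
  exists x, a <= x < t /\ bounded_on q x t.
Proof.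
  intros hat L. destruct (L 1 ltac:(lra)) as [d [hd Hd]].
  exists (Rmax a (t - d / 2)). split; [unfold Rmax; destruct Rle_dec; lra|].
  exists (Rabs l + 1 + Rabs (q t)). intros s hs.
  pose proof (Rabs_pos l). pose proof (Rabs_pos (q t)).
  destruct (Req_dec s t) as [->|hst]; [lra|].
  assert (t - d < s < t /\ a <= s) as [h1 h2] by (revert hs; unfold Rmax; destruct Rle_dec; lra).
  specialize (Hd s h1 h2). pose proof (Rabs_triang_inv (q s) l). lra.
Qed.

Lemma bounded_on_right_of_limit b q t l : t < b -> right_limit_within b q t l ->
  exists y, t < y <= b /\ bounded_on q t y.
Proof.
  intros htb L. destruct (L 1 ltac:(lra)) as [d [hd Hd]].
  exists (Rmin b (t + d / 2)). split; [unfold Rmin; destruct Rle_dec; lra|].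
  exists (Rabs l + 1 + Rabs (q t)). intros s hs.
  pose proof (Rabs_pos l). pose proof (Rabs_pos (q t)).
  destruct (Req_dec s t) as [->|hst]; [lra|].
  assert (t < s < t + d /\ s <= b) as [h1 h2] by (revert hs; unfold Rmin; destruct Rle_dec; lra).
  specialize (Hd s h1 h2). pose proof (Rabs_triang_inv (q s) l). lra.
Qed.

Lemma piecewise_continuous_bounded q a b : a < b ->
  piecewise_continuous q a b -> bounded_on q a b.
Proof.
  intros hab [_ [HR HL]].
  set (S := fun x => a <= x <= b /\ bounded_on q a x).
  destruct (completeness S) as [m [Hub Hlub]].
  { exists b. intros x [hx _]. lra. }
  { exists a. split; [lra | apply bounded_on_point]. }
  assert (ham : a <= m) by (apply Hub; split; [lra | apply bounded_on_point]).
  assert (hmb : m <= b) by (apply Hlub; intros x [hx _]; lra).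
  assert (Bm : bounded_on q a m).
  { destruct (Req_dec m a) as [->|hne]; [apply bounded_on_point|].
    destruct (HL m ltac:(lra)) as [l Hl].
    destruct (bounded_on_left_of_limit a q m l ltac:(lra) Hl) as [x [hx Bx]].
    assert (exists x', S x' /\ x < x') as [x' [[_ Bx'] hxx']].
    { apply NNPP. intro hn. assert (m <= x); [|lra]. apply Hlub.
      intros z hz. destruct (Rle_or_lt z x); auto. exfalso; eauto. }
    apply bounded_on_union with x' x; auto; lra. }
  destruct (Req_dec m b) as [->|hne]; auto. exfalso.
  destruct (HR m ltac:(lra)) as [l Hl].
  destruct (bounded_on_right_of_limit b q m l ltac:(lra) Hl) as [y [hy By]].
  assert (y <= m); [|lra].
  apply Hub. split; [lra|]. apply bounded_on_union with m m; auto; lra.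
Qed.

Lemma derivable_pt_lim_exp_scal k w :
  derivable_pt_lim (fun x => exp (k * x)) w (exp (k * w) * k).
Proof.
  apply (derivable_pt_lim_comp (fun x => k * x) exp).
  - pose proof (derivable_pt_lim_scal id k w 1 (derivable_pt_lim_id w)) as Dk.
    rewrite Rmult_1_r in Dk. exact Dk.
  - apply derivable_pt_lim_exp.
Qed.

Lemma derivable_pt_lim_exp_scal_mult k E dE w : derivable_pt_lim E w dE ->
  derivable_pt_lim (fun x => exp (k * x) * E x) w (exp (k * w) * (k * E w + dE)).
Proof.
  intros D.
  replace (exp (k * w) * (k * E w + dE)) with (exp (k * w) * k * E w + exp (k * w) * dE) by ring.
  exact (derivable_pt_lim_mult (fun x => exp (k * x)) E w _ _ (derivable_pt_lim_exp_scal k w) D).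
Qed.

Lemma cont_within_exp_scal_mult a b k E : a <= b ->
  (forall t, a <= t <= b -> cont_within a b E t) ->
  forall t, a <= t <= b -> cont_within a b (fun x => exp (k * x) * E x) t.
Proof.
  intros hab C. apply cont_within_mult; auto. intros t _.
  apply cont_within_of_continuity_pt, derivable_continuous_pt.
  exists (exp (k * t) * k). apply derivable_pt_lim_exp_scal.
Qed.

Lemma gronwall_le0 (L : list R) E dE K a b c : a <= c <= b ->
  (forall t, a <= t <= b -> cont_within a b E t) ->
  (forall w, a < w < b -> ~ In w L -> derivable_pt_lim E w (dE w)) ->
  (forall w, a < w < b -> Rabs (dE w) <= K * E w) ->
  E c = 0 -> forall x, a <= x <= b -> E x <= 0.
Proof.
  intros hc C D B Ec x hx.
  assert (CK : forall k x' y', a <= x' -> y' <= b -> forall w, x' <= w <= y' ->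
                 cont_within x' y' (fun y => exp (k * y) * E y) w).
  { intros k x' y' h1 h2 w hw. apply cont_within_restrict with a b; auto.
    apply cont_within_exp_scal_mult; auto; lra. }
  destruct (Rle_or_lt c x) as [hcx|hxc].
    set (g := fun y => - (exp (- K * y) * E y)).
    assert (Mono : g c <= g x).
    { apply (Rle_of_deriv_nonneg_off L g (fun w => - (exp (- K * w) * (- K * E w + dE w))) c x hcx).
      - apply cont_within_opp; [lra|]. apply CK; lra.
      - intros w hw hn. split.
        + apply (derivable_pt_lim_opp (fun y => exp (- K * y) * E y)).
          apply derivable_pt_lim_exp_scal_mult, D; auto; lra.
        + pose proof (exp_pos (- K * w)). specialize (B w ltac:(lra)).
          assert (0 <= K * E w - dE w) by (revert B; split_Rabs; lra).
          nra. }
    unfold g in Mono. rewrite Ec, Rmult_0_r in Mono. pose proof (exp_pos (- K * x)). nra.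
    set (g := fun y => exp (K * y) * E y).
    assert (Mono : g x <= g c).
    { apply (Rle_of_deriv_nonneg_off L g (fun w => exp (K * w) * (K * E w + dE w)) x c ltac:(lra)).
      - apply CK; lra.
      - intros w hw hn. split.
        + apply derivable_pt_lim_exp_scal_mult, D; auto; lra.
        + pose proof (exp_pos (K * w)). specialize (B w ltac:(lra)).
          assert (0 <= K * E w + dE w) by (revert B; split_Rabs; lra).
          nra. }
    unfold g in Mono. rewrite Ec, Rmult_0_r in Mono. pose proof (exp_pos (K * x)). nra.
Qed.

Lemma energy_deriv_bound M qq x y : Rabs qq <= M ->
  Rabs (2 * x * y + 2 * y * (- qq * x)) <= (1 + M) * (x * x + y * y).
Proof.
  intros hq.
  assert (hxy : 2 * Rabs (x * y) <= x * x + y * y).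
  { pose proof (Rle_0_sqr (x - y)); pose proof (Rle_0_sqr (x + y)); unfold Rsqr in *.
    split_Rabs; lra. }
  assert (h1q : Rabs (1 - qq) <= 1 + M) by (revert hq; split_Rabs; lra).
  replace (2 * x * y + 2 * y * (- qq * x)) with (2 * (x * y) * (1 - qq)) by ring.
  rewrite (Rabs_mult (2 * (x * y))), (Rabs_mult 2), (Rabs_right 2) by lra.
  pose proof (Rabs_pos (x * y)). pose proof (Rabs_pos (1 - qq)).
  rewrite Rmult_comm. apply Rmult_le_compat; lra.
Qed.

Lemma ode_solution_with_zero_data q a b v v' c : a < b ->
  piecewise_continuous q a b -> ode_solution_with q a b v v' ->
  a <= c <= b -> v c = 0 -> v' c = 0 -> forall x, a <= x <= b -> v x = 0.
Proof.
  intros hab PC Sv hc vc v'c x hx.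
  destruct (piecewise_continuous_bounded q a b hab PC) as [M HM].
  destruct PC as [[P HP] _].
  pose proof Sv as [Dv [Cv' Dv']].
  set (E := fun y => v y * v y + v' y * v' y).
  assert (Ex : E x <= 0).
  { apply (gronwall_le0 P E (fun w => 2 * v w * v' w + 2 * v' w * (- q w * v w)) (1 + M) a b c);
      auto.
    - apply cont_within_plus; [lra | |]; apply cont_within_mult; auto; try lra;
        apply (ode_solution_with_cont q a b v v' Sv).
    - intros w hw hn.
      assert (Dw : derivable_pt_lim v w (v' w)) by (apply deriv_within_interior with a b; auto; apply Dv; lra).
      assert (D'w : derivable_pt_lim v' w (- q w * v w)) by auto.
      replace (2 * v w * v' w + 2 * v' w * (- q w * v w))
        with ((v' w * v w + v w * v' w) + ((- q w * v w) * v' w + v' w * (- q w * v w))) by ring.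
      apply (derivable_pt_lim_plus (fun y => v y * v y) (fun y => v' y * v' y));
        [apply (derivable_pt_lim_mult v v) | apply (derivable_pt_lim_mult v' v')]; auto.
    - intros w hw. apply energy_deriv_bound, HM; lra.
    - unfold E; rewrite vc, v'c; ring. }
  unfold E in Ex. nra.
Qed.

Lemma wronskian_deriv q1 q2 a b u u' v v' w :
  ode_solution_with q1 a b u u' -> ode_solution_with q2 a b v v' ->
  a < w < b -> continuity_pt q1 w -> continuity_pt q2 w ->
  derivable_pt_lim (fun x => u x * v' x - u' x * v x) w ((q1 w - q2 w) * u w * v w).
Proof.
  intros [Du [_ Du']] [Dv [_ Dv']] hw c1 c2.
  assert (Duw : derivable_pt_lim u w (u' w)) by (apply deriv_within_interior with a b; auto; apply Du; lra).
  assert (Dvw : derivable_pt_lim v w (v' w)) by (apply deriv_within_interior with a b; auto; apply Dv; lra).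
  replace ((q1 w - q2 w) * u w * v w)
    with ((u' w * v' w + u w * (- q2 w * v w)) - ((- q1 w * u w) * v w + u' w * v' w)) by ring.
  apply (derivable_pt_lim_minus (fun x => u x * v' x) (fun x => u' x * v x));
    [apply (derivable_pt_lim_mult u v') | apply (derivable_pt_lim_mult u' v)]; auto.
Qed.

Lemma sturm_comparison q1 q2 a b u v (P : list R) : a < b ->
  (forall t, a < t < b -> ~ In t P -> continuity_pt q1 t /\ continuity_pt q2 t) ->
  ode_solution q1 a b u -> ode_solution q2 a b v ->
  0 <= u a -> 0 <= u b -> (forall t, a < t < b -> 0 < u t) ->
  v a = 0 -> v b = 0 -> (forall t, a < t < b -> 0 < v t) ->
  (forall t, a < t < b -> q2 t < q1 t) -> False.
Proof.
  intros hab HP [u' Su] [v' Sv] ua ub upos va vb vpos hq.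
  set (W := fun x => u x * v' x - u' x * v x).
  assert (Wa : 0 <= W a).
  { assert (0 <= v' a) by (apply (deriv_within_ge0_of_pos_right a b v a b); try lra; auto; apply Sv; lra).
    unfold W; rewrite va; nra. }
  assert (Wb : W b <= 0).
  { assert (v' b <= 0) by (apply (deriv_within_le0_of_pos_left a b v a b); try lra; auto; apply Sv; lra).
    unfold W; rewrite vb; nra. }
  assert (Wlt : W a < W b).
  { apply (Rlt_of_deriv_pos_off P W (fun w => (q1 w - q2 w) * u w * v w) a b hab).
    - pose proof Su as [_ [Cu' _]]. pose proof Sv as [_ [Cv' _]].
      apply cont_within_minus; [lra | |]; apply cont_within_mult; auto; try lra;
        eapply ode_solution_with_cont; eauto.
    - intros w hw hn. destruct (HP w hw hn) as [c1 c2]. split.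
      + exact (wronskian_deriv q1 q2 a b u u' v v' w Su Sv hw c1 c2).
      + specialize (hq w hw). specialize (upos w hw). specialize (vpos w hw).
        apply Rmult_lt_0_compat; [apply Rmult_lt_0_compat|]; lra. }
  lra.
Qed.

Lemma ode_solution_sign_normalize q a b u x y : a <= x -> x < y -> y <= b ->
  ode_solution q a b u -> (forall w, x < w < y -> u w <> 0) ->
  exists u1, ode_solution q a b u1 /\ (forall w, u w = 0 -> u1 w = 0) /\
             (forall w, x < w < y -> 0 < u1 w).
Proof.
  intros hx hxy hy [u' Su] N.
  destruct (cont_within_sign_const a b u x y) as [pos|neg]; auto.
  { exact (ode_solution_with_cont q a b u u' Su). }
  - exists u. split; [exists u'; exact Su | auto].
  - exists (fun w => - u w). split; [|split].
    + exists (fun w => - u' w). apply ode_solution_with_opp; auto; lra.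
    + intros w uw. rewrite uw. ring.
    + intros w hw. specialize (neg w hw). lra.
Qed.

Lemma no_two_zeros_in_interval q1 q2 a b u J v s t : a < b ->
  piecewise_continuous q1 a b -> piecewise_continuous q2 a b ->
  ode_solution q1 a b u -> u a = 0 -> u b = 0 -> (forall t, a < t < b -> u t <> 0) ->
  is_interval J -> (forall t, J t -> a <= t <= b) -> (forall t, J t -> q1 t > q2 t) ->
  nontrivial_solution q2 a b v ->
  J s -> J t -> s < t -> v s = 0 -> v t = 0 -> False.
Proof.
  intros hab PC1 PC2 Su ua ub unz IJ JI Jq [[v' Sv] [x0 [hx0 vx0]]] Js Jt hst vs vt.
  pose proof (JI s Js). pose proof (JI t Jt).
  assert (v's : v' s <> 0).
  { intro v's. apply vx0. apply (ode_solution_with_zero_data q2 a b v v' s); auto; lra. }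
  pose proof (nonzero_right_of_simple_zero a b v s (v' s)
                ltac:(lra) v's (proj1 Sv s ltac:(lra)) vs) as Hright.
  destruct (first_zero_after a b v s t) as [m [hm [vm Nm]]]; auto; try lra.
  { exact (ode_solution_with_cont q2 a b v v' Sv). }
  assert (hq : forall w, s < w < m -> q2 w < q1 w).
  { intros w hw. apply Jq, (IJ s w t); auto; lra. }
  destruct (ode_solution_sign_normalize q1 a b u a b) as [u1 [Su1 [u1z u1pos]]]; auto; try lra.
  destruct (ode_solution_sign_normalize q2 a b v s m) as [v1 [Sv1 [v1z v1pos]]]; auto; try lra.
  { exists v'; exact Sv. }
  destruct PC1 as [[P1 HP1] _], PC2 as [[P2 HP2] _].
  apply (sturm_comparison q1 q2 s m u1 v1 (P1 ++ P2)); auto; try lra.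
  - intros w hw hn. rewrite in_app_iff in hn. split; [apply HP1 | apply HP2]; tauto || lra.
  - apply ode_solution_restrict with a b; auto; lra.
  - apply ode_solution_restrict with a b; auto; lra.
  - destruct (Req_dec s a) as [->|]; [rewrite (u1z a ua); lra | apply Rlt_le, u1pos; lra].
  - destruct (Req_dec m b) as [->|]; [rewrite (u1z b ub); lra | apply Rlt_le, u1pos; lra].
  - intros w hw. apply u1pos; lra.
Qed.

Theorem lemma1 (q1 q2 : R -> R) (a b : R) (u : R -> R) (J : R -> Prop) :
  a < b ->
  piecewise_continuous q1 a b ->
  piecewise_continuous q2 a b ->
  nontrivial_solution q1 a b u ->
  u a = 0 -> u b = 0 -> (forall t, a < t < b -> u t <> 0) ->
  is_interval J ->
  (forall t, J t -> a <= t <= b) ->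
  (forall t, a <= t <= b -> ~ J t -> q1 t <= q2 t) ->
  (forall t, J t -> q1 t > q2 t) ->
  forall v : R -> R, nontrivial_solution q2 a b v ->
    forall s t, J s -> J t -> v s = 0 -> v t = 0 -> s = t.
Proof.
  intros hab PC1 PC2 [Su _] ua ub unz IJ JI _ Jq v Nv s t Js Jt vs vt.
  destruct (Rtotal_order s t) as [h|[h|h]]; auto; exfalso.
  - exact (no_two_zeros_in_interval q1 q2 a b u J v s t hab PC1 PC2 Su ua ub unz IJ JI Jq Nv Js Jt h vs vt).
  - exact (no_two_zeros_in_interval q1 q2 a b u J v t s hab PC1 PC2 Su ua ub unz IJ JI Jq Nv Jt Js h vt vs).
Qed.
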